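(* Let $A(y)=A_1(y)+A_2(y)+A_3(y)+A_4(y)$, $y\in\mathbb R$, where $$A_1(y)=-\frac1{2\sqrt{2\pi}}\int_0^\infty e^{-2(t-y)^2}\,\mathrm{erfc}\,t\,dt,\qquad A_2(y)=\frac1{\sqrt{2\pi}}\int_0^\infty e^{-2(t-y)^2}\,t\Big(\frac{e^{-t^2}}{\sqrt\pi}-t\,\mathrm{erfc}\,t\Big)dt,$$ $$A_3(y)=\frac14\big(1+\mathrm{erf}(\sqrt2 y)\big)\Big(-\frac{y e^{-2y^2}}{\sqrt{2\pi}}+\Big(\frac14+y^2\Big)\big(1-\mathrm{erf}(\sqrt2 y)\big)\Big),$$ $$A_4(y)=-\frac1{\sqrt{2\pi}}\int_0^\infty dt_1\int_0^{t_1}dt_2\,\frac1{t_1-t_2}\Big(e^{-2(t_1-y)^2}\big(\mathrm{erf}(t_1-t_2)+\mathrm{erf}(\sqrt2(t_2-y))\big)+e^{-2(t_2-y)^2}\big(\mathrm{erf}(t_1-t_2)-\mathrm{erf}(\sqrt2(t_1-y))\big)\Big).$$ Then, as $y\to-\infty$, $$A(y)\sim\frac{|y|\,e^{-2y^2}}{2(2\pi)^{1/2}}.$$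
   Context: $A(y)$ is the function such that the edge-scaled density of the soft-disk two-dimensional one-component plasma satisfies $\rho^{\rm edge}_{(1)}(y;\Gamma)=\rho^{\rm edge}_{(1)}(y;2)-\frac{\Gamma-2}{\pi}A(y)+\mathcal O((\Gamma-2)^2)$. $\mathrm{erf}$ is the error function and $\mathrm{erfc}=1-\mathrm{erf}$. *)

From Stdlib Require Import Reals.
From Coquelicot Require Import Coquelicot.
Open Scope R_scope.

Definition erf (x : R) : R :=
  2 / sqrt PI * RInt (fun s => exp (- s ^ 2)) 0 x.
Definition erfc (x : R) : R := 1 - erf x.

Definition int0inf (f : R -> R) : R :=
  RInt_gen f (at_point 0) (Rbar_locally p_infty).

Definition A1 (y : R) : R :=
  - (1 / (2 * sqrt (2 * PI))) *
    int0inf (fun t => exp (- 2 * (t - y) ^ 2) * erfc t).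

Definition A2 (y : R) : R :=
  (1 / sqrt (2 * PI)) *
    int0inf (fun t => exp (- 2 * (t - y) ^ 2) * t *
                      (exp (- t ^ 2) / sqrt PI - t * erfc t)).

Definition A3 (y : R) : R :=
  / 4 * (1 + erf (sqrt 2 * y)) *
    (- (y * exp (- 2 * y ^ 2)) / sqrt (2 * PI)
     + (/ 4 + y ^ 2) * (1 - erf (sqrt 2 * y))).

(* integrand of A4; at t2 = t1 the numerator vanishes *)
Definition A4_integrand (y t1 t2 : R) : R :=
  / (t1 - t2) *
  (exp (- 2 * (t1 - y) ^ 2) * (erf (t1 - t2) + erf (sqrt 2 * (t2 - y)))
   + exp (- 2 * (t2 - y) ^ 2) * (erf (t1 - t2) - erf (sqrt 2 * (t1 - y)))).

Definition A4 (y : R) : R :=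
  - (1 / sqrt (2 * PI)) *
    int0inf (fun t1 => RInt (fun t2 => A4_integrand y t1 t2) 0 t1).

Definition A (y : R) : R := A1 y + A2 y + A3 y + A4 y.

(* As [y -> -oo] only [A3] contributes at leading order.  Since
   [erf (sqrt 2 y) = -1 + 2/sqrt PI * T (sqrt 2 |y|)] with [T] the Gaussian tail,
   the Mills-ratio bounds [e^{-x^2} (1/(2x) - 1/(4x^3)) <= T x <= e^{-x^2}/(2x)]
   give [A3 y / D y = 1 + O(1/|y|)] for [D y = |y| e^{-2y^2} / (2 sqrt(2 PI))].
   The other three terms are [O(e^{-2y^2})]: on [t >= 0] the weight
   [e^{-2(t-y)^2} = e^{-2y^2} e^{-4|y|t} e^{-2t^2}] is dominated by [e^{-2y^2} e^{-4|y|t}],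
   and in [A4] the factor [1/(t1-t2)] is absorbed by rewriting the differences in the
   numerator as averages over segments. *)

From Pilot Require Import Defs.
From Stdlib Require Import Reals Lra Psatz FunctionalExtensionality.
From Coquelicot Require Import Coquelicot.
Open Scope R_scope.

Lemma ex_RInt_continuous_R (f : R -> R) a b :
  (forall z, Rmin a b <= z <= Rmax a b -> continuous f z) -> ex_RInt f a b.
Proof. exact (@ex_RInt_continuous R_CompleteNormedModule f a b). Qed.

Lemma RInt_correct_R (f : R -> R) a b : ex_RInt f a b -> is_RInt f a b (RInt f a b).
Proof. exact (@RInt_correct R_CompleteNormedModule f a b). Qed.

Lemma ex_derive_continuous_R (f : R -> R) x : ex_derive f x -> continuous f x.
Proof. exact (@ex_derive_continuous R_AbsRing R_NormedModule f x). Qed.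

Lemma RInt_scal_R (f : R -> R) a b l :
  ex_RInt f a b -> RInt (fun x => l * f x) a b = l * RInt f a b.
Proof. exact (@RInt_scal R_CompleteNormedModule f a b l). Qed.

Lemma RInt_minus_R (f g : R -> R) a b : ex_RInt f a b -> ex_RInt g a b ->
  RInt (fun x => f x - g x) a b = RInt f a b - RInt g a b.
Proof. exact (@RInt_minus R_CompleteNormedModule f g a b). Qed.

Lemma RInt_comp_lin_R (f : R -> R) u v a b : ex_RInt f (u * a + v) (u * b + v) ->
  RInt (fun y => u * f (u * y + v)) a b = RInt f (u * a + v) (u * b + v).
Proof. exact (@RInt_comp_lin R_CompleteNormedModule f u v a b). Qed.

Lemma RInt_Chasles_R (f : R -> R) a b c :
  ex_RInt f a b -> ex_RInt f b c -> RInt f a b + RInt f b c = RInt f a c.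
Proof. exact (@RInt_Chasles R_CompleteNormedModule f a b c). Qed.

Lemma RInt_ext_R (f g : R -> R) a b :
  (forall x, Rmin a b < x < Rmax a b -> f x = g x) -> RInt f a b = RInt g a b.
Proof. exact (@RInt_ext R_CompleteNormedModule f g a b). Qed.

Lemma RInt_point_R (f : R -> R) a : RInt f a a = 0.
Proof. exact (@RInt_point R_CompleteNormedModule a f). Qed.

Lemma is_RInt_derive_R (F f : R -> R) a b :
  (forall x, Rmin a b <= x <= Rmax a b -> is_derive F x (f x)) ->
  (forall x, Rmin a b <= x <= Rmax a b -> continuous f x) ->
  RInt f a b = F b - F a :> R.
Proof.
  intros HF Hf.
  rewrite (is_RInt_unique _ _ _ _ (@is_RInt_derive R_CompleteNormedModule F f a b HF Hf)).
  reflexivity.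
Qed.

Lemma Rabs_RInt_le_const (f : R -> R) a b M : ex_RInt f a b ->
  (forall x, Rmin a b <= x <= Rmax a b -> Rabs (f x) <= M) ->
  Rabs (RInt f a b) <= Rabs (b - a) * M.
Proof.
  intros He Hb. apply (@norm_RInt_le_const_abs R_NormedModule f a b (RInt f a b) M Hb).
  exact (RInt_correct_R f a b He).
Qed.

Lemma ball_R (x y e : R) : Rabs (y - x) < e -> ball x e y.
Proof. easy. Qed.

Lemma exp_mono a b : a <= b -> exp a <= exp b.
Proof. intros [H | ->]; [left; apply exp_increasing |]; lra. Qed.

Lemma exp_le_1 a : a <= 0 -> exp a <= 1.
Proof. intros H. rewrite <- exp_0. now apply exp_mono. Qed.
(** * Integrals dominated by a decaying exponential *)

Lemma RInt_exp_linear (C k a b : R) : 0 < k ->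
  RInt (fun t => C * exp (- k * t)) a b = C / k * exp (- k * a) - C / k * exp (- k * b) :> R.
Proof.
  intros Hk.
  rewrite (is_RInt_derive_R (fun t => - (C / k) * exp (- k * t))).
  - ring.
  - intros x _. auto_derive; auto. field. lra.
  - intros x _. apply ex_derive_continuous_R. auto_derive. auto.
Qed.

Lemma Rabs_RInt_le_exp (f : R -> R) (C k a b : R) : a <= b -> 0 < k -> ex_RInt f a b ->
  (forall t, a <= t <= b -> Rabs (f t) <= C * exp (- k * t)) ->
  Rabs (RInt f a b) <= C / k * exp (- k * a).
Proof.
  intros Hab Hk Hex Hb.
  assert (HC : 0 <= C).
  { assert (H0 := Hb a (conj (Rle_refl a) Hab)).
    assert (H1 := Rabs_pos (f a)). assert (H2 := exp_pos (- k * a)). nra. }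
  assert (Hg : ex_RInt (fun t => C * exp (- k * t)) a b).
  { apply ex_RInt_continuous_R. intros z _. apply ex_derive_continuous_R. auto_derive. auto. }
  assert (H := norm_RInt_le f (fun t => C * exp (- k * t)) a b _ _ Hab Hb
                 (RInt_correct_R _ _ _ Hex) (RInt_correct_R _ _ _ Hg)).
  change (Rabs (RInt f a b) <= RInt (fun t => C * exp (- k * t)) a b) in H.
  rewrite RInt_exp_linear in H by exact Hk.
  assert (0 <= C / k * exp (- k * b)).
  { apply Rmult_le_pos; [apply Rdiv_le_0_compat; lra | left; apply exp_pos]. }
  lra.
Qed.

Section ExpDominated.

Variables (f : R -> R) (C k : R).
Hypothesis k_pos : 0 < k.
Hypothesis f_cont : forall t, 0 <= t -> continuous f t.
Hypothesis f_dom : forall t, 0 <= t -> Rabs (f t) <= C * exp (- k * t).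

Lemma ex_RInt_on_nonneg u v : 0 <= u -> 0 <= v -> ex_RInt f u v.
Proof.
  intros Hu Hv. apply ex_RInt_continuous_R. intros z [Hz _]. apply f_cont.
  eapply Rle_trans; [| exact Hz]. now apply Rmin_glb.
Qed.

Lemma Rabs_RInt_tail_le u v : 0 <= u <= v ->
  Rabs (RInt f 0 v - RInt f 0 u) <= C / k * exp (- k * u).
Proof.
  intros [Hu Huv].
  rewrite <- (RInt_Chasles_R f 0 u v) by (apply ex_RInt_on_nonneg; lra).
  rewrite Rplus_comm; unfold Rminus; rewrite Rplus_assoc, Rplus_opp_r, Rplus_0_r.
  apply Rabs_RInt_le_exp; auto.
  - now apply ex_RInt_on_nonneg; lra.
  - intros t Ht. apply f_dom. lra.
Qed.

Lemma Rabs_RInt_0_le b : 0 <= b -> Rabs (RInt f 0 b) <= C / k.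
Proof.
  intros Hb. assert (H := Rabs_RInt_tail_le 0 b (conj (Rle_refl 0) Hb)).
  now rewrite RInt_point_R, Rmult_0_r, exp_0, Rmult_1_r, Rminus_0_r in H.
Qed.

Lemma dom_const_nonneg : 0 <= C.
Proof.
  assert (H0 := f_dom 0 (Rle_refl 0)).
  assert (H1 := Rabs_pos (f 0)). assert (H2 := exp_pos (- k * 0)). nra.
Qed.

(* The tail bound [C/k e^{-ku}] makes [b |-> RInt f 0 b] Cauchy at [+oo]. *)
Lemma ex_lim_RInt_0 : exists L, filterlim (fun b => RInt f 0 b) (Rbar_locally p_infty) (locally L).
Proof.
  apply (filterlim_locally_cauchy (F := Rbar_locally p_infty)).
  intros eps. assert (He := cond_pos eps). assert (HC := dom_const_nonneg).
  assert (Hsmall : exists M, 0 < M /\ C / k * exp (- k * M) < eps / 2).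
  { set (M := 2 * C / (k * k * eps) + 1).
    assert (HM0 : 0 <= 2 * C / (k * k * eps)).
    { apply Rdiv_le_0_compat; [lra |]. assert (0 < k * k) by nra. nra. }
    exists M. split; [unfold M; lra |].
    assert (Hex := exp_ineq1_le (k * M)). assert (Hp := exp_pos (k * M)).
    replace (exp (- k * M)) with (/ exp (k * M)) by (rewrite <- exp_Ropp; f_equal; ring).
    apply (Rmult_lt_reg_r (exp (k * M))); auto.
    replace (C / k * / exp (k * M) * exp (k * M)) with (C / k) by (field; lra).
    apply Rlt_le_trans with (eps / 2 * (1 + k * M)); [| apply Rmult_le_compat_l; lra].
    replace (eps / 2 * (1 + k * M)) with (C / k + eps / 2 + eps * k / 2)
      by (unfold M; field; split; lra).
    assert (0 < eps * k) by nra. lra. }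
  destruct Hsmall as [M [HM HeM]].
  exists (fun x => M < x). split; [now exists M |].
  assert (Hmono : forall w, M <= w -> C / k * exp (- k * w) <= C / k * exp (- k * M)).
  { intros w Hw. apply Rmult_le_compat_l; [apply Rdiv_le_0_compat; lra |].
    apply exp_mono. nra. }
  intros u v Hu Hv. apply ball_R.
  destruct (Rle_lt_dec u v).
  - assert (H1 := Rabs_RInt_tail_le u v ltac:(lra)). assert (H2 := Hmono u ltac:(lra)). lra.
  - assert (H1 := Rabs_RInt_tail_le v u ltac:(lra)). assert (H2 := Hmono v ltac:(lra)).
    rewrite Rabs_minus_sym. lra.
Qed.

Lemma is_RInt_gen_of_lim L :
  filterlim (fun b => RInt f 0 b) (Rbar_locally p_infty) (locally L) ->
  is_RInt_gen f (at_point 0) (Rbar_locally p_infty) L.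
Proof.
  intros HL. unfold is_RInt_gen.
  apply (filterlimi_lim_ext_loc (fun ab => RInt f (fst ab) (snd ab))).
  - exists (fun a => a = 0) (fun b => 0 < b); [reflexivity | now exists 0 |].
    intros x y -> Hy. apply RInt_correct_R, ex_RInt_on_nonneg; simpl; lra.
  - apply filterlim_ext_loc with (f := fun ab : R * R => RInt f 0 (snd ab)).
    + exists (fun a => a = 0) (fun _ => True); [reflexivity | now exists 0 |].
      now intros x y -> _.
    + eapply filterlim_comp; [apply filterlim_snd | exact HL].
Qed.

Lemma Rabs_int0inf_le_exp : Rabs (int0inf f) <= C / k.
Proof.
  destruct ex_lim_RInt_0 as [L HL].
  unfold int0inf. rewrite (is_RInt_gen_unique _ _ (is_RInt_gen_of_lim L HL)).
  apply Rabs_le. split.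
  - apply (filterlim_le (F := Rbar_locally p_infty) (fun _ => - (C / k)) (fun b => RInt f 0 b)
             (Finite (- (C / k))) (Finite L)); [| apply filterlim_const | exact HL].
    exists 0. intros x Hx. assert (H := Rabs_RInt_0_le x ltac:(lra)).
    apply Rabs_le_between in H; lra.
  - apply (filterlim_le (F := Rbar_locally p_infty) (fun b => RInt f 0 b) (fun _ => C / k)
             (Finite L) (Finite (C / k))); [| exact HL | apply filterlim_const].
    exists 0. intros x Hx. assert (H := Rabs_RInt_0_le x ltac:(lra)).
    apply Rabs_le_between in H; lra.
Qed.

End ExpDominated.

(** * The Gaussian integral *)

Definition gauss (s : R) : R := exp (- s ^ 2).
Definition gauss_int (x : R) : R := RInt gauss 0 x.

Lemma erf_gauss_int x : erf x = 2 / sqrt PI * gauss_int x.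
Proof. reflexivity. Qed.

Lemma continuous_gauss x : continuous gauss x.
Proof. apply ex_derive_continuous_R. unfold gauss. auto_derive. auto. Qed.

Lemma ex_RInt_gauss a b : ex_RInt gauss a b.
Proof. apply ex_RInt_continuous_R. intros; apply continuous_gauss. Qed.

Lemma Rabs_gauss_le_1 x : Rabs (gauss x) <= 1.
Proof. unfold gauss. rewrite Rabs_pos_eq by (left; apply exp_pos). apply exp_le_1. nra. Qed.

Lemma is_derive_gauss_int x : is_derive gauss_int x (gauss x).
Proof.
  apply (is_derive_RInt gauss gauss_int 0 x).
  - apply filter_forall. intros b. apply RInt_correct_R, ex_RInt_gauss.
  - apply continuous_gauss.
Qed.

Lemma gauss_int_sub a b : gauss_int b - gauss_int a = RInt gauss a b.
Proof. unfold gauss_int. rewrite <- (RInt_Chasles_R gauss 0 a b) by apply ex_RInt_gauss. ring. Qed.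

Lemma gauss_int_le a b : a <= b -> gauss_int a <= gauss_int b.
Proof.
  intros H. assert (0 <= RInt gauss a b).
  { apply RInt_ge_0; auto. apply ex_RInt_gauss. intros; left; apply exp_pos. }
  rewrite <- gauss_int_sub in H0. lra.
Qed.

Lemma gauss_int_0 : gauss_int 0 = 0.
Proof. apply RInt_point_R. Qed.

Lemma gauss_int_ge0 x : 0 <= x -> 0 <= gauss_int x.
Proof. intros H. rewrite <- gauss_int_0. now apply gauss_int_le. Qed.

Lemma gauss_int_opp x : gauss_int (- x) = - gauss_int x.
Proof.
  unfold gauss_int.
  assert (H := RInt_comp_lin_R gauss (-1) 0 0 x (ex_RInt_gauss _ _)).
  replace (-1 * 0 + 0) with 0 in H by ring.
  replace (-1 * x + 0) with (- x) in H by ring.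
  rewrite <- H, (RInt_ext_R _ (fun y => (-1) * gauss y)).
  - rewrite RInt_scal_R by apply ex_RInt_gauss. ring.
  - intros y _. unfold gauss. do 3 f_equal. ring.
Qed.

Lemma gauss_int_sub_le_exp s X : 1 <= s <= X -> 0 <= gauss_int X - gauss_int s <= exp (- s).
Proof.
  intros [H1 H2]. split; [assert (H := gauss_int_le s X H2); lra |].
  rewrite gauss_int_sub.
  assert (H := Rabs_RInt_le_exp gauss 1 1 s X H2 Rlt_0_1 (ex_RInt_gauss _ _)).
  assert (Hb : forall t, s <= t <= X -> Rabs (gauss t) <= 1 * exp (- (1) * t)).
  { intros t Ht. unfold gauss. rewrite Rabs_pos_eq by (left; apply exp_pos).
    rewrite Rmult_1_l. apply exp_mono. nra. }
  specialize (H Hb). apply Rabs_le_between in H.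
  replace (1 / 1 * exp (- (1) * s)) with (exp (- s)) in H by (rewrite Ropp_mult_distr_l_reverse, Rmult_1_l; field).
  lra.
Qed.

(* The classical trick: [gauss_int x ^ 2 + gauss_aux x] has zero derivative,
   and [gauss_aux 0 = atan 1 = PI / 4]. *)
Definition gauss_aux (x : R) : R :=
  RInt (fun t => exp (- x ^ 2 * (1 + t ^ 2)) / (1 + t ^ 2)) 0 1.

Lemma ex_RInt_gauss_aux x a b : ex_RInt (fun t => exp (- x ^ 2 * (1 + t ^ 2)) / (1 + t ^ 2)) a b.
Proof. apply ex_RInt_continuous_R. intros z _. apply ex_derive_continuous_R. auto_derive. nra. Qed.

Lemma is_derive_gauss_aux (x : R) : is_derive gauss_aux x (- 2 * gauss x * gauss_int x).
Proof.
  set (d := fun u v => -2 * u * exp (- u ^ 2 * (1 + v ^ 2))).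
  assert (Hd : forall u v, is_derive (fun z => exp (- z ^ 2 * (1 + v ^ 2)) / (1 + v ^ 2)) u (d u v)).
  { intros u v. unfold d. auto_derive; [nra |]. simpl. field. nra. }
  assert (Hdc : forall u v, continuity_2d_pt d u v).
  { intros u v. apply continuity_2d_pt_ext with
      (f := fun u v => (-2 * u) * exp (- (u * u) * (1 + v * v))).
    { intros; unfold d; simpl. now rewrite !Rmult_1_r. }
    apply continuity_2d_pt_mult.
    - apply continuity_2d_pt_mult; [apply continuity_2d_pt_const | apply continuity_2d_pt_id1].
    - apply (continuity_1d_2d_pt_comp exp (fun u v => - (u * u) * (1 + v * v))).
      + apply continuity_pt_filterlim, continuous_exp.
      + apply continuity_2d_pt_mult.
        * apply continuity_2d_pt_opp, continuity_2d_pt_mult; apply continuity_2d_pt_id1.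
        * apply continuity_2d_pt_plus; [apply continuity_2d_pt_const |].
          apply continuity_2d_pt_mult; apply continuity_2d_pt_id2. }
  replace (- 2 * gauss x * gauss_int x) with (RInt (fun t => Derive (fun z => exp (- z ^ 2 * (1 + t ^ 2)) / (1 + t ^ 2)) x) 0 1).
  - apply (is_derive_RInt_param (fun u t => exp (- u ^ 2 * (1 + t ^ 2)) / (1 + t ^ 2))).
    + apply filter_forall. intros u t _. eexists. apply Hd.
    + intros t _. apply continuity_2d_pt_ext with (f := d); [| apply Hdc].
      intros u v. symmetry. apply is_derive_unique, Hd.
    + apply filter_forall. intros y. apply ex_RInt_gauss_aux.
  - rewrite (RInt_ext_R _ (fun t => (- 2 * gauss x) * (x * gauss (x * t + 0)))).
    + rewrite RInt_scal_R.
      * rewrite RInt_comp_lin_R by apply ex_RInt_gauss.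
        now rewrite Rmult_0_r, Rmult_1_r, !Rplus_0_r.
      * apply ex_RInt_continuous_R. intros z _.
        apply ex_derive_continuous_R. unfold gauss. auto_derive. auto.
    + intros t _. transitivity (d x t); [apply is_derive_unique, Hd |]. unfold d, gauss.
      replace (- (x * t + 0) ^ 2) with (- x ^ 2 * (1 + t ^ 2) + x ^ 2) by ring.
      rewrite exp_plus.
      assert (E : exp (- x ^ 2) * exp (x ^ 2) = 1) by (rewrite <- exp_plus, Rplus_opp_l; apply exp_0).
      transitivity (-2 * x * exp (- x ^ 2 * (1 + t ^ 2)) * (exp (- x ^ 2) * exp (x ^ 2)));
        [rewrite E |]; ring.
Qed.

Lemma gauss_aux_0 : gauss_aux 0 = PI / 4.
Proof.
  unfold gauss_aux. rewrite (RInt_ext_R _ (fun t => / (1 + t ^ 2))).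
  - rewrite (is_RInt_derive_R atan).
    + rewrite atan_1, atan_0. ring.
    + intros x _. auto_derive; auto. field. nra.
    + intros x _. apply ex_derive_continuous_R. auto_derive. nra.
  - intros t _. replace (- 0 ^ 2 * (1 + t ^ 2)) with 0 by ring. rewrite exp_0. field. nra.
Qed.

Lemma gauss_int_sq x : gauss_int x * gauss_int x = PI / 4 - gauss_aux x.
Proof.
  set (Phi := fun y => gauss_int y * gauss_int y + gauss_aux y).
  assert (H : RInt (fun _ => 0) 0 x = Phi x - Phi 0 :> R).
  { apply is_RInt_derive_R; [| intros; apply continuous_const].
    intros y _.
    assert (Hy := is_derive_plus _ _ y _ _
      (is_derive_mult gauss_int gauss_int y _ _ (is_derive_gauss_int y) (is_derive_gauss_int y) Rmult_comm)
      (is_derive_gauss_aux y)).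
    replace 0 with (plus (plus (mult (gauss y) (gauss_int y)) (mult (gauss_int y) (gauss y)))
                         (- 2 * gauss y * gauss_int y)) by (unfold plus, mult; simpl; ring).
    exact Hy. }
  rewrite RInt_const in H. unfold Phi in H. rewrite gauss_int_0, gauss_aux_0 in H.
  unfold scal in H; simpl in H; unfold mult in H; simpl in H. lra.
Qed.

Lemma gauss_aux_bounds x : 0 <= gauss_aux x <= gauss x.
Proof.
  unfold gauss_aux. split.
  - apply RInt_ge_0; [lra | apply ex_RInt_gauss_aux |].
    intros t _. left. apply Rdiv_lt_0_compat; [apply exp_pos | nra].
  - replace (gauss x) with (RInt (fun _ => gauss x) 0 1)
      by (rewrite RInt_const; unfold scal; simpl; unfold mult; simpl; ring).
    apply RInt_le; [lra | apply ex_RInt_gauss_aux | apply ex_RInt_const |].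
    intros t Ht. unfold gauss.
    assert (Hxt : 0 <= x ^ 2 * t ^ 2) by (apply Rmult_le_pos; apply pow2_ge_0).
    assert (H := exp_mono (- x ^ 2 * (1 + t ^ 2)) (- x ^ 2) ltac:(nra)).
    assert (Hp := exp_pos (- x ^ 2 * (1 + t ^ 2))).
    apply Rle_trans with (exp (- x ^ 2 * (1 + t ^ 2))); [| exact H].
    apply Rmult_le_reg_r with (1 + t ^ 2); [nra |].
    unfold Rdiv. rewrite Rmult_assoc, Rinv_l by nra. nra.
Qed.

Lemma sqrt_PI_pos : 0 < sqrt PI.
Proof. apply sqrt_lt_R0, PI_RGT_0. Qed.

Lemma sqrt_PI_sq : sqrt PI * sqrt PI = PI.
Proof. apply sqrt_sqrt. left; apply PI_RGT_0. Qed.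

Lemma gauss_int_le_half_sqrt_PI x : gauss_int x <= sqrt PI / 2.
Proof.
  assert (H4 := sqrt_PI_sq). assert (H5 := sqrt_PI_pos).
  destruct (Rle_lt_dec 0 x).
  - assert (H := gauss_int_sq x). assert (H2 := gauss_aux_bounds x).
    assert (H3 := gauss_int_ge0 x r). assert (0 < gauss x) by apply exp_pos. nra.
  - assert (gauss_int x <= 0) by (rewrite <- gauss_int_0; apply gauss_int_le; lra). lra.
Qed.

Lemma Rabs_gauss_int_le x : Rabs (gauss_int x) <= sqrt PI / 2.
Proof.
  apply Rabs_le. split; [| apply gauss_int_le_half_sqrt_PI].
  assert (H := gauss_int_le_half_sqrt_PI (- x)). rewrite gauss_int_opp in H. lra.
Qed.

Lemma Rabs_erf_le_1 z : Rabs (erf z) <= 1.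
Proof.
  rewrite erf_gauss_int, Rabs_mult. assert (H := sqrt_PI_pos).
  rewrite (Rabs_pos_eq (2 / sqrt PI)) by (apply Rdiv_le_0_compat; lra).
  apply Rle_trans with (2 / sqrt PI * (sqrt PI / 2)).
  - apply Rmult_le_compat_l; [apply Rdiv_le_0_compat; lra | apply Rabs_gauss_int_le].
  - right. field. lra.
Qed.

(** * Mills-ratio bounds for the Gaussian tail *)

Definition gauss_tail (x : R) : R := sqrt PI / 2 - gauss_int x.

Lemma gauss_tail_ge0 x : 0 <= gauss_tail x.
Proof. unfold gauss_tail. assert (H := gauss_int_le_half_sqrt_PI x). lra. Qed.

(* From [gauss_int x ^ 2 = PI/4 - gauss_aux x]: the tail is [gauss_aux x / (sqrt PI/2 + gauss_int x)]. *)
Lemma gauss_tail_le_gauss x : 0 <= x -> gauss_tail x <= 2 / sqrt PI * gauss x.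
Proof.
  intros Hx. unfold gauss_tail.
  assert (H := gauss_int_sq x). assert (H2 := gauss_aux_bounds x).
  assert (H3 := gauss_int_ge0 x Hx). assert (H4 := sqrt_PI_sq). assert (H5 := sqrt_PI_pos).
  assert (E : sqrt PI / 2 - gauss_int x = gauss_aux x / (sqrt PI / 2 + gauss_int x))
    by (field_simplify_eq; nra).
  rewrite E.
  apply Rle_trans with (gauss_aux x / (sqrt PI / 2)).
  - apply Rmult_le_compat_l; [lra |]. apply Rinv_le_contravar; lra.
  - replace (2 / sqrt PI * gauss x) with (gauss x / (sqrt PI / 2)) by (field; lra).
    apply Rmult_le_compat_r; [left; apply Rinv_0_lt_compat |]; lra.
Qed.

Lemma Rle_of_le_plus_gauss (a b K x : R) : 0 <= K ->
  (forall X, x <= X -> a <= b + K * gauss X) -> a <= b.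
Proof.
  intros HK H. destruct (Rle_lt_dec a b) as [| Hab]; auto.
  exfalso. set (d := a - b). assert (Hd : 0 < d) by (unfold d; lra).
  set (X := Rabs x + K / d + 1).
  assert (HKd : 0 <= K / d) by (apply Rdiv_le_0_compat; lra).
  assert (HX1 : 1 <= X) by (unfold X; assert (0 <= Rabs x) by apply Rabs_pos; lra).
  assert (HxX : x <= X) by (unfold X; assert (x <= Rabs x) by apply RRle_abs; lra).
  specialize (H X HxX). unfold gauss in H.
  assert (He := exp_ineq1_le (X ^ 2)). assert (Hp := exp_pos (X ^ 2)).
  assert (E : K * exp (- X ^ 2) * exp (X ^ 2) = K)
    by (rewrite Rmult_assoc, <- exp_plus, Rplus_opp_l, exp_0; ring).
  assert (HX2 : X <= X ^ 2) by nra.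
  assert (K < d * exp (X ^ 2)).
  { apply Rlt_le_trans with (d * X).
    - unfold X. replace (d * (Rabs x + K / d + 1)) with (d * Rabs x + K + d) by (field; lra).
      assert (0 <= d * Rabs x) by (apply Rmult_le_pos; [lra | apply Rabs_pos]). lra.
    - apply Rmult_le_compat_l; lra. }
  assert (K * exp (- X ^ 2) < d) by (apply (Rmult_lt_reg_r (exp (X ^ 2))); auto; rewrite E; lra).
  unfold d in *. lra.
Qed.

Ltac pow_pos_nonzero u := let H := fresh in intro H;
  assert (0 < u ^ 2) by (apply pow_lt; lra); assert (0 < u ^ 3) by (apply pow_lt; lra);
  assert (0 < u ^ 4) by (apply pow_lt; lra); simpl in *; nra.

Lemma gauss_tail_upper x : 0 < x -> gauss_tail x <= gauss x / (2 * x).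
Proof.
  intros Hx. unfold gauss.
  apply (Rle_of_le_plus_gauss _ _ (2 / sqrt PI) x).
  { assert (H := sqrt_PI_pos). apply Rdiv_le_0_compat; lra. }
  intros X HX.
  assert (Hint : gauss_int X - gauss_int x <= exp (- x ^ 2) / (2 * x) - exp (- X ^ 2) / (2 * X)).
  { rewrite gauss_int_sub.
    assert (HI : RInt (fun u => exp (- u ^ 2) * (1 + / (2 * u ^ 2))) x X
                 = - exp (- X ^ 2) / (2 * X) - - exp (- x ^ 2) / (2 * x) :> R).
    { apply (is_RInt_derive_R (fun v => - exp (- v ^ 2) / (2 * v))); intros u Hu; rewrite Rmin_left in Hu by lra.
      - auto_derive; [pow_pos_nonzero u |]. simpl. field. pow_pos_nonzero u.
      - apply ex_derive_continuous_R. auto_derive. repeat split; pow_pos_nonzero u. }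
    apply Rle_trans with (RInt (fun u => exp (- u ^ 2) * (1 + / (2 * u ^ 2))) x X).
    - apply RInt_le; [lra | apply ex_RInt_gauss | |].
      + apply ex_RInt_continuous_R. intros u Hu. rewrite Rmin_left in Hu by lra.
        apply ex_derive_continuous_R. auto_derive. pow_pos_nonzero u.
      + intros u Hu. unfold gauss.
        assert (0 < / (2 * u ^ 2)) by (apply Rinv_0_lt_compat; nra).
        assert (0 < exp (- u ^ 2)) by apply exp_pos. nra.
    - rewrite HI. lra. }
  assert (H1 := gauss_tail_le_gauss X ltac:(lra)).
  assert (H2 : 0 <= exp (- X ^ 2) / (2 * X)) by (apply Rdiv_le_0_compat; [left; apply exp_pos | lra]).
  unfold gauss_tail, gauss in *. lra.
Qed.

Lemma gauss_tail_lower x : 0 < x -> gauss x * (/ (2 * x) - / (4 * x ^ 3)) <= gauss_tail x.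
Proof.
  intros Hx. unfold gauss.
  rewrite <- (Rplus_0_r (gauss_tail x)).
  apply (Rle_of_le_plus_gauss _ _ (/ (2 * x)) x); [left; apply Rinv_0_lt_compat; lra |].
  intros X HX.
  assert (Hint : exp (- x ^ 2) * (/ (2 * x) - / (4 * x ^ 3)) - exp (- X ^ 2) * (/ (2 * X) - / (4 * X ^ 3))
                 <= gauss_int X - gauss_int x).
  { rewrite gauss_int_sub.
    assert (HI : RInt (fun u => exp (- u ^ 2) * (1 - 3 / (4 * u ^ 4))) x X
                 = - exp (- X ^ 2) * (/ (2 * X) - / (4 * X ^ 3))
                   - - exp (- x ^ 2) * (/ (2 * x) - / (4 * x ^ 3)) :> R).
    { apply (is_RInt_derive_R (fun v => - exp (- v ^ 2) * (/ (2 * v) - / (4 * v ^ 3)))); intros u Hu; rewrite Rmin_left in Hu by lra.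
      - auto_derive; [repeat split; pow_pos_nonzero u |]. simpl. field. repeat split; pow_pos_nonzero u.
      - apply ex_derive_continuous_R. auto_derive. repeat split; pow_pos_nonzero u. }
    apply Rle_trans with (RInt (fun u => exp (- u ^ 2) * (1 - 3 / (4 * u ^ 4))) x X); [rewrite HI; lra |].
    apply RInt_le; [lra | | apply ex_RInt_gauss |].
    + apply ex_RInt_continuous_R. intros u Hu. rewrite Rmin_left in Hu by lra.
      apply ex_derive_continuous_R. auto_derive. pow_pos_nonzero u.
    + intros u Hu. unfold gauss.
      assert (0 < 3 / (4 * u ^ 4)) by (apply Rdiv_lt_0_compat; [lra | assert (0 < u ^ 4) by (apply pow_lt; lra); lra]).
      assert (0 < exp (- u ^ 2)) by apply exp_pos. nra. }
  assert (H1 := gauss_tail_ge0 X).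
  assert (H2 : exp (- X ^ 2) * (/ (2 * X) - / (4 * X ^ 3)) <= / (2 * x) * exp (- X ^ 2)).
  { rewrite Rmult_comm. apply Rmult_le_compat_r; [left; apply exp_pos |].
    assert (0 < / (4 * X ^ 3)) by (apply Rinv_0_lt_compat; assert (0 < X ^ 3) by (apply pow_lt; lra); lra).
    assert (/ (2 * X) <= / (2 * x)) by (apply Rinv_le_contravar; lra). lra. }
  unfold gauss_tail, gauss in *. lra.
Qed.

(** * The leading term [A3] *)

Definition A_asymptote (y : R) : R := Rabs y * exp (- 2 * y ^ 2) / (2 * sqrt (2 * PI)).

Lemma sqrt2_bounds : 1.4 < sqrt 2 /\ sqrt 2 * sqrt 2 = 2.
Proof.
  split; [| apply sqrt_sqrt; lra].
  apply Rsqr_incrst_0; [| lra | apply sqrt_pos].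
  rewrite Rsqr_sqrt by lra. unfold Rsqr; lra.
Qed.

Lemma sqrt_PI_bounds : 1.7 < sqrt PI /\ sqrt PI <= 2.
Proof.
  assert (H3 := PI2_3_2). assert (H4 := PI_4). assert (H := sqrt_PI_sq). assert (H0 := sqrt_PI_pos).
  split; [| nra].
  apply Rsqr_incrst_0; [| lra | apply sqrt_pos].
  rewrite Rsqr_sqrt by lra. unfold Rsqr; lra.
Qed.

Lemma sqrt_2PI : sqrt (2 * PI) = sqrt 2 * sqrt PI.
Proof. apply sqrt_mult; [lra | left; apply PI_RGT_0]. Qed.

Lemma sqrt_2PI_bounds : 2 <= sqrt (2 * PI) <= 3.
Proof.
  rewrite sqrt_2PI. destruct sqrt2_bounds as [H2 H2s]. destruct sqrt_PI_bounds as [Hp Hp2]. nra.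
Qed.

Lemma erf_opp_gauss_tail x : erf (- x) = -1 + 2 / sqrt PI * gauss_tail x.
Proof.
  rewrite erf_gauss_int, gauss_int_opp. unfold gauss_tail.
  assert (H := sqrt_PI_pos). field. lra.
Qed.

Lemma gauss_tail_ratio_bounds x : 0 < x ->
  1 - / (2 * x ^ 2) <= 2 * x * gauss_tail x / gauss x <= 1.
Proof.
  intros Hx. assert (HE := exp_pos (- x ^ 2)). fold (gauss x) in HE.
  assert (Hu := gauss_tail_upper x Hx). assert (Hl := gauss_tail_lower x Hx).
  split.
  - apply (Rmult_le_reg_r (gauss x)); [exact HE |].
    replace (2 * x * gauss_tail x / gauss x * gauss x) with (2 * x * gauss_tail x) by (field; lra).
    replace ((1 - / (2 * x ^ 2)) * gauss x) with (2 * x * (gauss x * (/ (2 * x) - / (4 * x ^ 3))))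
      by (field; lra).
    apply Rmult_le_compat_l; lra.
  - apply (Rmult_le_reg_r (gauss x)); [exact HE |].
    replace (2 * x * gauss_tail x / gauss x * gauss x) with (2 * x * gauss_tail x) by (field; lra).
    apply (Rmult_le_reg_r (/ (2 * x))); [apply Rinv_0_lt_compat; lra |].
    replace (2 * x * gauss_tail x * / (2 * x)) with (gauss_tail x) by (field; lra).
    unfold Rdiv in Hu. lra.
Qed.

(* With [Y = - y], [A3 y / A_asymptote y] factors as the Mills ratio of [sqrt 2 Y] times this cofactor. *)
Lemma A3_cofactor_bounds (Y E T s2 sp : R) :
  1 <= Y -> 0 < E <= 1 -> 0 <= T <= E / (2 * (s2 * Y)) -> 1.4 < s2 -> 1.7 < sp ->
  let Q := (Y * E / (s2 * sp) + (/ 4 + Y ^ 2) * (2 - 2 / sp * T)) / (2 * Y ^ 2) in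
  1 - / Y <= Q <= 1 + / (2 * Y).
Proof.
  intros HY HE HT Hs2 Hsp Q.
  assert (HY2 : 0 < 2 * Y ^ 2) by nra.
  assert (Hss : 2 <= sp * s2) by nra.
  assert (HssY : 0 < sp * s2 * Y) by nra.
  assert (HTs : 2 / sp * T * (/ 4 + Y ^ 2) <= Y).
  { apply Rle_trans with (2 / sp * (1 / (2 * (s2 * Y))) * (/ 4 + Y ^ 2)).
    - apply Rmult_le_compat_r; [nra |]. apply Rmult_le_compat_l; [apply Rdiv_le_0_compat; lra |].
      apply Rle_trans with (E / (2 * (s2 * Y))); [lra |].
      apply Rmult_le_compat_r; [left; apply Rinv_0_lt_compat; nra | lra].
    - replace (2 / sp * (1 / (2 * (s2 * Y))) * (/ 4 + Y ^ 2)) with ((/ 4 + Y ^ 2) / (sp * s2 * Y))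
        by (field; repeat split; nra).
      apply (Rmult_le_reg_r (sp * s2 * Y)); [exact HssY |].
      unfold Rdiv; rewrite Rmult_assoc, Rinv_l by nra. nra. }
  assert (HEs : 0 <= Y * E / (s2 * sp) <= Y / 2).
  { split; [apply Rdiv_le_0_compat; nra |].
    apply (Rmult_le_reg_r (s2 * sp)); [nra |].
    unfold Rdiv; rewrite Rmult_assoc, Rinv_l by nra. nra. }
  assert (HTp : 0 <= 2 / sp * T * (/ 4 + Y ^ 2))
    by (apply Rmult_le_pos; [apply Rmult_le_pos; [apply Rdiv_le_0_compat |] |]; nra).
  unfold Q. split.
  - apply (Rmult_le_reg_r (2 * Y ^ 2)); [exact HY2 |].
    unfold Rdiv at 1. rewrite Rmult_assoc, Rinv_l, Rmult_1_r by lra.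
    replace ((1 - / Y) * (2 * Y ^ 2)) with (2 * Y ^ 2 - 2 * Y) by (field; lra). nra.
  - apply (Rmult_le_reg_r (2 * Y ^ 2)); [exact HY2 |].
    unfold Rdiv at 1. rewrite Rmult_assoc, Rinv_l, Rmult_1_r by lra.
    replace ((1 + / (2 * Y)) * (2 * Y ^ 2)) with (2 * Y ^ 2 + Y) by (field; lra). nra.
Qed.

Lemma A3_ratio_bound y : y <= -1 -> Rabs (A3 y / A_asymptote y - 1) <= 2 / (- y).
Proof.
  intros Hy. set (Y := - y). assert (HY : 1 <= Y) by (unfold Y; lra).
  destruct sqrt2_bounds as [Hs2 Hs2s]. destruct sqrt_PI_bounds as [Hsp _].
  set (x := sqrt 2 * Y).
  assert (Hx2 : x ^ 2 = 2 * Y ^ 2) by (unfold x; simpl; nra).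
  assert (HE : 0 < gauss x <= 1) by (split; [apply exp_pos | apply exp_le_1; nra]).
  assert (HEy : exp (- 2 * y ^ 2) = gauss x) by (unfold gauss; rewrite Hx2; unfold Y; f_equal; ring).
  set (th := 2 * x * gauss_tail x / gauss x).
  assert (Hth : 1 - / Y <= th <= 1).
  { destruct (gauss_tail_ratio_bounds x ltac:(unfold x; nra)) as [Hl Hu]. split; [| exact Hu].
    eapply Rle_trans; [| exact Hl]. rewrite Hx2.
    assert (/ (2 * (2 * Y ^ 2)) <= / Y) by (apply Rinv_le_contravar; nra). lra. }
  assert (HT : 0 <= gauss_tail x <= gauss x / (2 * x))
    by (split; [apply gauss_tail_ge0 | apply gauss_tail_upper; unfold x; nra]).
  destruct (A3_cofactor_bounds Y (gauss x) (gauss_tail x) (sqrt 2) (sqrt PI) HY HE HT Hs2 Hsp) as [HQl HQu].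
  set (Q := (Y * gauss x / (sqrt 2 * sqrt PI) + (/ 4 + Y ^ 2) * (2 - 2 / sqrt PI * gauss_tail x)) / (2 * Y ^ 2)) in *.
  assert (Hratio : A3 y / A_asymptote y = th * Q).
  { unfold A3, A_asymptote, th, Q.
    replace (sqrt 2 * y) with (- x) by (unfold x, Y; ring).
    rewrite erf_opp_gauss_tail, HEy, sqrt_2PI, Rabs_left by lra.
    replace (y * gauss x) with (- (Y * gauss x)) by (unfold Y; ring).
    replace (y ^ 2) with (Y ^ 2) by (unfold Y; ring). fold Y.
    unfold x in HE |- *. field. repeat split; nra. }
  rewrite Hratio. apply Rabs_le. replace (2 / - y) with (2 * / Y) by (unfold Y; field; lra).
  assert (0 < / Y) by (apply Rinv_0_lt_compat; lra).
  assert (/ Y <= 1) by (rewrite <- Rinv_1; apply Rinv_le_contravar; lra).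
  assert (/ (2 * Y) = / 2 * / Y) by (field; lra).
  split; nra.
Qed.

(** * The remainders [A1] and [A2] *)

Ltac erf_derive_side := repeat match goal with
  | |- _ /\ _ => split
  | |- True => exact I
  | |- ex_RInt _ _ _ => apply (ex_RInt_gauss _ _)
  | |- locally _ _ => apply filter_forall; intros;
                      apply continuity_pt_filterlim, (continuous_gauss _)
  | |- _ <> 0 => let H := fresh in intro H; nra
  end.

Lemma erfc_bounds t : 0 <= t -> 0 <= erfc t <= 1.
Proof.
  intros Ht. unfold erfc. rewrite erf_gauss_int.
  assert (H1 := gauss_int_le_half_sqrt_PI t). assert (H2 := gauss_int_ge0 t Ht).
  assert (Hsp := sqrt_PI_pos).
  assert (2 / sqrt PI * gauss_int t <= 1).
  { apply (Rmult_le_reg_r (sqrt PI)); [lra |].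
    replace (2 / sqrt PI * gauss_int t * sqrt PI) with (2 * gauss_int t) by (field; lra). lra. }
  assert (0 <= 2 / sqrt PI * gauss_int t) by (apply Rmult_le_pos; [apply Rdiv_le_0_compat |]; lra).
  lra.
Qed.

Lemma exp_sq_shift (y t : R) :
  exp (- 2 * (t - y) ^ 2) = exp (- 2 * y ^ 2) * exp (- (4 * - y) * t) * exp (- 2 * t ^ 2).
Proof. rewrite <- !exp_plus. f_equal. ring. Qed.

Lemma Rabs_int0inf_shifted_gauss_le (g : R -> R) (M y : R) : y < 0 ->
  (forall t, 0 <= t -> continuous g t) ->
  (forall t, 0 <= t -> Rabs (exp (- 2 * t ^ 2) * g t) <= M) ->
  Rabs (int0inf (fun t => exp (- 2 * (t - y) ^ 2) * g t)) <= M * exp (- 2 * y ^ 2) / (4 * - y).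
Proof.
  intros Hy Hc Hb. apply Rabs_int0inf_le_exp; [lra | |].
  - intros t Ht. apply (continuous_mult (fun t => exp (- 2 * (t - y) ^ 2))); [| now apply Hc].
    apply ex_derive_continuous_R. auto_derive. auto.
  - intros t Ht. rewrite exp_sq_shift.
    replace (exp (- 2 * y ^ 2) * exp (- (4 * - y) * t) * exp (- 2 * t ^ 2) * g t)
      with (exp (- 2 * y ^ 2) * exp (- (4 * - y) * t) * (exp (- 2 * t ^ 2) * g t)) by ring.
    rewrite Rabs_mult, Rabs_pos_eq by (left; apply Rmult_lt_0_compat; apply exp_pos).
    replace (M * exp (- 2 * y ^ 2) * exp (- (4 * - y) * t))
      with (exp (- 2 * y ^ 2) * exp (- (4 * - y) * t) * M) by ring.
    apply Rmult_le_compat_l; [left; apply Rmult_lt_0_compat; apply exp_pos | now apply Hb].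
Qed.

Lemma int0inf_ext (f g : R -> R) : (forall t, f t = g t) -> int0inf f = int0inf g.
Proof. intros H. f_equal. now apply functional_extensionality. Qed.

Lemma exp_sq_mul_poly_le t : 0 <= t -> exp (- 2 * t ^ 2) * (t + t * t) <= 2.
Proof.
  intros Ht. assert (H := exp_ineq1_le (2 * t ^ 2)).
  assert (E : exp (- 2 * t ^ 2) * exp (2 * t ^ 2) = 1)
    by (rewrite <- exp_plus; replace (- 2 * t ^ 2 + 2 * t ^ 2) with 0 by ring; apply exp_0).
  assert (Hp := exp_pos (2 * t ^ 2)). assert (Hq := exp_pos (- 2 * t ^ 2)).
  assert (t + t * t <= 2 * exp (2 * t ^ 2)) by nra.
  nra.
Qed.

Lemma A1_bound y : y <= -1 -> Rabs (Defs.A1 y) <= exp (- 2 * y ^ 2).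
Proof.
  intros Hy. unfold Defs.A1.
  assert (Hb := Rabs_int0inf_shifted_gauss_le erfc 1 y ltac:(lra)).
  assert (He := exp_pos (- 2 * y ^ 2)). assert (Hsq := sqrt_2PI_bounds).
  rewrite Rabs_mult, Rabs_Ropp, Rabs_pos_eq by (apply Rdiv_le_0_compat; lra).
  apply Rle_trans with (1 / (2 * sqrt (2 * PI)) * (1 * exp (- 2 * y ^ 2) / (4 * - y))).
  - apply Rmult_le_compat_l; [apply Rdiv_le_0_compat; lra |]. apply Hb.
    + intros t _. apply ex_derive_continuous_R. unfold erfc, erf. fold (gauss_int t).
      auto_derive. erf_derive_side.
    + intros t Ht. destruct (erfc_bounds t Ht).
      assert (0 < exp (- 2 * t ^ 2) <= 1) by (split; [apply exp_pos | apply exp_le_1; nra]).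
      rewrite Rabs_pos_eq by nra. nra.
  - apply (Rmult_le_reg_r (2 * sqrt (2 * PI) * (4 * - y))); [nra |].
    replace (1 / (2 * sqrt (2 * PI)) * (1 * exp (- 2 * y ^ 2) / (4 * - y)) * (2 * sqrt (2 * PI) * (4 * - y)))
      with (exp (- 2 * y ^ 2)) by (field; lra).
    assert (1 <= 2 * sqrt (2 * PI) * (4 * - y)) by nra. nra.
Qed.

Lemma A2_bound y : y <= -1 -> Rabs (A2 y) <= exp (- 2 * y ^ 2).
Proof.
  intros Hy. unfold A2. assert (Hsp := sqrt_PI_bounds).
  assert (Hb := Rabs_int0inf_shifted_gauss_le
                  (fun t => t * (exp (- t ^ 2) / sqrt PI - t * erfc t)) 2 y ltac:(lra)).
  assert (He := exp_pos (- 2 * y ^ 2)). assert (Hsq := sqrt_2PI_bounds).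
  rewrite Rabs_mult, Rabs_pos_eq by (apply Rdiv_le_0_compat; lra).
  apply Rle_trans with (1 / sqrt (2 * PI) * (2 * exp (- 2 * y ^ 2) / (4 * - y))).
  - apply Rmult_le_compat_l; [apply Rdiv_le_0_compat; lra |].
    rewrite (int0inf_ext _ (fun t => exp (- 2 * (t - y) ^ 2) * (t * (exp (- t ^ 2) / sqrt PI - t * erfc t))))
      by (intros; ring).
    apply Hb.
    + intros t _. apply ex_derive_continuous_R. unfold erfc, erf. fold (gauss_int t).
      auto_derive. erf_derive_side.
    + intros t Ht. destruct (erfc_bounds t Ht).
      assert (0 < exp (- t ^ 2) / sqrt PI <= 1).
      { split; [apply Rdiv_lt_0_compat; [apply exp_pos | lra] |].
        apply (Rmult_le_reg_r (sqrt PI)); [lra |].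
        replace (exp (- t ^ 2) / sqrt PI * sqrt PI) with (exp (- t ^ 2)) by (field; lra).
        assert (exp (- t ^ 2) <= 1) by (apply exp_le_1; nra). lra. }
      assert (Hf : Rabs (exp (- t ^ 2) / sqrt PI - t * erfc t) <= 1 + t) by (apply Rabs_le; nra).
      assert (Hp := exp_sq_mul_poly_le t Ht). assert (He2 := exp_pos (- 2 * t ^ 2)).
      rewrite !Rabs_mult, (Rabs_pos_eq (exp _)), (Rabs_pos_eq t) by lra.
      assert (0 <= Rabs (exp (- t ^ 2) / sqrt PI - t * erfc t)) by apply Rabs_pos.
      apply Rle_trans with (exp (- 2 * t ^ 2) * (t + t * t)); [| exact Hp].
      apply Rmult_le_compat_l; nra.
  - apply (Rmult_le_reg_r (sqrt (2 * PI) * (4 * - y))); [nra |].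
    replace (1 / sqrt (2 * PI) * (2 * exp (- 2 * y ^ 2) / (4 * - y)) * (sqrt (2 * PI) * (4 * - y)))
      with (2 * exp (- 2 * y ^ 2)) by (field; lra).
    assert (2 <= sqrt (2 * PI) * (4 * - y)) by nra. nra.
Qed.

Lemma continuity_2d_pt_continuous_snd (k : R -> R -> R) x t :
  continuity_2d_pt k x t -> continuous (k x) t.
Proof.
  intros H. apply filterlim_locally. intros eps.
  destruct (H eps) as [d Hd]. exists d. intros v Hv. apply ball_R, Hd; [| exact Hv].
  rewrite Rminus_eq_0, Rabs_R0. apply cond_pos.
Qed.

Lemma continuity_2d_pt_comp2 (g f1 f2 : R -> R -> R) x y :
  continuity_2d_pt f1 x y -> continuity_2d_pt f2 x y -> continuity_2d_pt g (f1 x y) (f2 x y) ->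
  continuity_2d_pt (fun u v => g (f1 u v) (f2 u v)) x y.
Proof.
  rewrite !continuity_2d_pt_filterlim. intros H1 H2 H3.
  apply (continuous_comp_2 (fun z : R * R => f1 (fst z) (snd z))
                           (fun z : R * R => f2 (fst z) (snd z)) g (x, y)); auto.
Qed.

Lemma continuity_2d_pt_comp1 (g : R -> R) (f : R -> R -> R) x y :
  continuity_2d_pt f x y -> continuous g (f x y) -> continuity_2d_pt (fun u v => g (f u v)) x y.
Proof. intros H1 H2. apply continuity_1d_2d_pt_comp; auto. now apply continuity_pt_filterlim. Qed.

Lemma continuity_2d_pt_affine (a b c : R) x y : continuity_2d_pt (fun u v => a * u + b * v + c) x y.
Proof.
  repeat apply continuity_2d_pt_plus; try apply continuity_2d_pt_const;
    apply continuity_2d_pt_mult; auto using continuity_2d_pt_const, continuity_2d_pt_id1, continuity_2d_pt_id2.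
Qed.

Lemma Rabs_RInt_diag_sub_le (k : R -> R -> R) c x e B :
  (forall u a b, ex_RInt (k u) a b) ->
  (forall t, Rmin 0 c <= t <= Rmax 0 c -> Rabs (k x t - k c t) <= e) ->
  (forall t, Rmin c x <= t <= Rmax c x -> Rabs (k x t) <= B) ->
  Rabs (RInt (k x) 0 x - RInt (k c) 0 c) <= Rabs c * e + Rabs (x - c) * B.
Proof.
  intros Hex Hclose Hbound.
  rewrite <- (RInt_Chasles_R (k x) 0 c x) by apply Hex.
  replace (RInt (k x) 0 c + RInt (k x) c x - RInt (k c) 0 c)
    with ((RInt (k x) 0 c - RInt (k c) 0 c) + RInt (k x) c x) by ring.
  rewrite <- RInt_minus_R by apply Hex.
  eapply Rle_trans; [apply Rabs_triang | apply Rplus_le_compat].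
  - replace (Rabs c) with (Rabs (c - 0)) by (now rewrite Rminus_0_r).
    apply Rabs_RInt_le_const; [| exact Hclose].
    apply (@ex_RInt_minus R_CompleteNormedModule); apply Hex.
  - now apply Rabs_RInt_le_const.
Qed.

Lemma continuous_RInt_diag (k : R -> R -> R) c :
  (forall x t, continuity_2d_pt k x t) -> continuous (fun x => RInt (k x) 0 x) c.
Proof.
  intros Hk.
  assert (Hex : forall x a b, ex_RInt (k x) a b).
  { intros x a b. apply ex_RInt_continuous_R. intros z _. now apply continuity_2d_pt_continuous_snd. }
  set (m := Rabs c + 1).
  assert (Hcm : - m <= c - 1 /\ c + 1 <= m /\ 0 < m).
  { unfold m. assert (H1 := RRle_abs c). assert (H2 := RRle_abs (- c)). rewrite Rabs_Ropp in H2. lra. }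
  destruct (bounded_continuity (k c) (- m) m) as [M HM].
  { intros x _. now apply continuity_2d_pt_continuous_snd. }
  assert (HM0 : 0 <= M) by (assert (H := HM c ltac:(lra)); assert (H0 := Rabs_pos (k c c)); change (Rabs (k c c) < M) in H; lra).
  apply filterlim_locally. intros [eps Heps]. simpl.
  assert (He1 : 0 < eps / (2 * m)) by (apply Rdiv_lt_0_compat; lra).
  destruct (uniform_continuity_2d k (c - 1) (c + 1) (- m) m (fun x y _ _ => Hk x y) (mkposreal _ He1)) as [d Hd].
  set (e1 := eps / (2 * m)) in *.
  set (r := Rmin (Rmin 1 d) (eps / (2 * (M + e1 + 1)))).
  assert (Hr : 0 < r) by (apply Rmin_pos; [apply Rmin_pos; [lra | apply cond_pos] | apply Rdiv_lt_0_compat; lra]).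
  exists (mkposreal _ Hr). intros x Hx. change (Rabs (x - c) < r) in Hx. apply ball_R.
  assert (Hr1 : r <= 1) by (unfold r; eapply Rle_trans; apply Rmin_l).
  assert (Hrd : r <= d) by (unfold r; eapply Rle_trans; [apply Rmin_l | apply Rmin_r]).
  assert (Hre : r <= eps / (2 * (M + e1 + 1))) by apply Rmin_r.
  assert (Hxc : c - 1 <= x <= c + 1) by (apply Rabs_le_between'; lra).
  assert (Hclose : forall t, - m <= t <= m -> Rabs (k x t - k c t) <= e1).
  { intros t Ht. left. apply (Hd c t x t); try lra.
    rewrite Rminus_eq_0, Rabs_R0. apply cond_pos. }
  eapply Rle_lt_trans.
  { apply (Rabs_RInt_diag_sub_le k c x e1 (M + e1) Hex).
    - intros t Ht. apply Hclose. unfold Rmin, Rmax in Ht. destruct Rle_dec in Ht; lra.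
    - intros t Ht. assert (Htm : - m <= t <= m) by (unfold Rmin, Rmax in Ht; destruct Rle_dec in Ht; lra).
      assert (H1 := Hclose t Htm). assert (H2 := HM t Htm). change (Rabs (k c t) < M) in H2.
      replace (k x t) with (k c t + (k x t - k c t)) by ring.
      eapply Rle_trans; [apply Rabs_triang | lra]. }
  assert (HA : Rabs c * e1 < eps / 2).
  { assert (Hcm' : Rabs c < m) by (unfold m; lra).
    unfold e1. apply (Rmult_lt_reg_r (2 * m)); [lra |].
    replace (Rabs c * (eps / (2 * m)) * (2 * m)) with (Rabs c * eps) by (field; lra).
    nra. }
  assert (HB : Rabs (x - c) * (M + e1) <= eps / 2).
  { apply Rle_trans with (eps / (2 * (M + e1 + 1)) * (M + e1)).
    - apply Rmult_le_compat_r; lra.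
    - apply (Rmult_le_reg_r (2 * (M + e1 + 1))); [lra |].
      replace (eps / (2 * (M + e1 + 1)) * (M + e1) * (2 * (M + e1 + 1))) with (eps * (M + e1)) by (field; lra).
      nra. }
  lra.
Qed.

Definition seg_avg (phi : R -> R) (a s : R) : R := RInt (fun u => phi (a + s * u)) 0 1.

Section SegAvg.

Variable phi : R -> R.
Hypothesis phi_cont : forall x, continuous phi x.

Lemma continuous_seg_param a s u : continuous (fun w => phi (a + s * w)) u.
Proof.
  apply (continuous_comp (fun w => a + s * w) phi); [| apply phi_cont].
  apply ex_derive_continuous_R. auto_derive. auto.
Qed.

Lemma ex_RInt_seg_param a s : ex_RInt (fun u => phi (a + s * u)) 0 1.
Proof. apply ex_RInt_continuous_R. intros; apply continuous_seg_param. Qed.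

Lemma seg_avg_mul a s : s * seg_avg phi a s = RInt phi a (a + s).
Proof.
  unfold seg_avg. rewrite <- RInt_scal_R by apply ex_RInt_seg_param.
  assert (H := RInt_comp_lin_R phi s a 0 1).
  replace (s * 0 + a) with a in H by ring. replace (s * 1 + a) with (a + s) in H by ring.
  rewrite <- H by (apply ex_RInt_continuous_R; intros; apply phi_cont).
  apply RInt_ext_R. intros x _. do 2 f_equal. ring.
Qed.

Lemma Rabs_seg_avg_le a s M :
  (forall u, 0 <= u <= 1 -> Rabs (phi (a + s * u)) <= M) -> Rabs (seg_avg phi a s) <= M.
Proof.
  intros H. unfold seg_avg. replace M with (Rabs (1 - 0) * M) by (rewrite Rminus_0_r, Rabs_R1; ring).
  apply Rabs_RInt_le_const; [apply ex_RInt_seg_param |].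
  intros x Hx. rewrite Rmin_left, Rmax_right in Hx by lra. now apply H.
Qed.

Lemma continuity_2d_pt_seg_avg a0 s0 : continuity_2d_pt (seg_avg phi) a0 s0.
Proof.
  intros eps.
  set (m := Rabs a0 + Rabs s0 + 2).
  assert (He2 : 0 < eps / 2) by (assert (H := cond_pos eps); lra).
  destruct (unifcont_1d phi (- m) m (fun x _ => phi_cont x) (mkposreal _ He2)) as [d Hd].
  assert (Hd2 : 0 < Rmin 1 (d / 2)) by (apply Rmin_pos; [lra | assert (H := cond_pos d); lra]).
  exists (mkposreal _ Hd2). intros u v Hu Hv. simpl in Hu, Hv.
  assert (Hu1 := Rlt_le_trans _ _ _ Hu (Rmin_l _ _)). assert (Hu2 := Rlt_le_trans _ _ _ Hu (Rmin_r _ _)).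
  assert (Hv1 := Rlt_le_trans _ _ _ Hv (Rmin_l _ _)). assert (Hv2 := Rlt_le_trans _ _ _ Hv (Rmin_r _ _)).
  unfold seg_avg. rewrite <- RInt_minus_R by apply ex_RInt_seg_param.
  apply Rle_lt_trans with (Rabs (1 - 0) * (eps / 2)); [| rewrite Rminus_0_r, Rabs_R1; lra].
  apply Rabs_RInt_le_const.
  { apply ex_RInt_continuous_R. intros z _.
    apply (continuous_minus (fun w => phi (u + v * w)) (fun w => phi (a0 + s0 * w)));
      apply continuous_seg_param. }
  intros w Hw. rewrite Rmin_left, Rmax_right in Hw by lra.
  assert (Hin : forall p q, Rabs p <= Rabs a0 + 1 -> Rabs q <= Rabs s0 + 1 -> - m <= p + q * w <= m).
  { intros p q Hp1 Hq1. unfold m. apply Rabs_le_between.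
    apply Rle_trans with (Rabs p + Rabs (q * w)); [apply Rabs_triang |].
    rewrite Rabs_mult, (Rabs_pos_eq w) by lra. assert (0 <= Rabs q) by apply Rabs_pos. nra. }
  assert (Hua : Rabs u <= Rabs a0 + 1).
  { replace u with (a0 + (u - a0)) by ring. eapply Rle_trans; [apply Rabs_triang | lra]. }
  assert (Hvs : Rabs v <= Rabs s0 + 1).
  { replace v with (s0 + (v - s0)) by ring. eapply Rle_trans; [apply Rabs_triang | lra]. }
  assert (Hball : ball (a0 + s0 * w) d (u + v * w)).
  { apply ball_R. replace (u + v * w - (a0 + s0 * w)) with ((u - a0) + (v - s0) * w) by ring.
    eapply Rle_lt_trans; [apply Rabs_triang |].
    rewrite Rabs_mult, (Rabs_pos_eq w) by lra. assert (0 <= Rabs (v - s0)) by apply Rabs_pos. nra. }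
  assert (HH := Hd _ _ (Hin a0 s0 ltac:(lra) ltac:(lra)) (Hin u v Hua Hvs) Hball).
  destruct (Rle_lt_dec (Rabs (phi (u + v * w) - phi (a0 + s0 * w))) (eps / 2)) as [| Hc]; auto.
  exfalso. apply HH. intros Hb. change (Rabs (phi (u + v * w) - phi (a0 + s0 * w)) < eps / 2) in Hb. lra.
Qed.

End SegAvg.

(** * The double integral [A4] *)

Definition shifted_gauss (y t : R) : R := exp (- 2 * (t - y) ^ 2).
Definition shifted_gauss_deriv (y t : R) : R := - 4 * (t - y) * exp (- 2 * (t - y) ^ 2).

(* Dividing by [t1 - t2] turns each difference in the numerator of [A4_integrand]
   into an average over a segment, so the kernel is continuous across [t2 = t1]. *)
Definition A4_kernel (y t1 t2 : R) : R :=
  2 / sqrt PI * seg_avg gauss 0 (t1 - t2) * (shifted_gauss y t1 + shifted_gauss y t2)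
  - shifted_gauss y t1 * (2 / sqrt PI) * sqrt 2
    * seg_avg gauss (sqrt 2 * (t2 - y)) (sqrt 2 * (t1 - t2))
  + erf (sqrt 2 * (t1 - y)) * seg_avg (shifted_gauss_deriv y) t2 (t1 - t2).

Lemma continuous_shifted_gauss y t : continuous (shifted_gauss y) t.
Proof. apply ex_derive_continuous_R. unfold shifted_gauss. auto_derive. auto. Qed.

Lemma continuous_shifted_gauss_deriv y t : continuous (shifted_gauss_deriv y) t.
Proof. apply ex_derive_continuous_R. unfold shifted_gauss_deriv. auto_derive. auto. Qed.

Lemma shifted_gauss_sub y a b :
  shifted_gauss y b - shifted_gauss y a = RInt (shifted_gauss_deriv y) a b.
Proof.
  rewrite (is_RInt_derive_R (shifted_gauss y)); [reflexivity | |].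
  - intros x _. unfold shifted_gauss, shifted_gauss_deriv. auto_derive; auto. simpl; unfold Rminus. ring.
  - intros; apply continuous_shifted_gauss_deriv.
Qed.

Lemma A4_integrand_kernel y t1 t2 : t2 <> t1 -> A4_integrand y t1 t2 = A4_kernel y t1 t2.
Proof.
  intros Hne. unfold A4_integrand, A4_kernel. set (s := t1 - t2). assert (Hs : s <> 0) by (unfold s; lra).
  assert (E1 : s * seg_avg gauss 0 s = gauss_int s).
  { rewrite seg_avg_mul by apply continuous_gauss. unfold gauss_int. f_equal. ring. }
  assert (E2 : sqrt 2 * s * seg_avg gauss (sqrt 2 * (t2 - y)) (sqrt 2 * s)
               = gauss_int (sqrt 2 * (t1 - y)) - gauss_int (sqrt 2 * (t2 - y))).
  { rewrite seg_avg_mul by apply continuous_gauss. rewrite gauss_int_sub. f_equal. unfold s. ring. }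
  assert (E3 : s * seg_avg (shifted_gauss_deriv y) t2 s = shifted_gauss y t1 - shifted_gauss y t2).
  { rewrite seg_avg_mul by apply continuous_shifted_gauss_deriv.
    rewrite shifted_gauss_sub. f_equal. unfold s. ring. }
  fold (shifted_gauss y t1) (shifted_gauss y t2). rewrite !erf_gauss_int, <- E1.
  apply (Rmult_eq_reg_l s); [| exact Hs].
  rewrite <- Rmult_assoc, Rinv_r, Rmult_1_l by exact Hs.
  transitivity (2 / sqrt PI * (s * seg_avg gauss 0 s) * (shifted_gauss y t1 + shifted_gauss y t2)
    - shifted_gauss y t1 * (2 / sqrt PI) * (sqrt 2 * s * seg_avg gauss (sqrt 2 * (t2 - y)) (sqrt 2 * s))
    + 2 / sqrt PI * gauss_int (sqrt 2 * (t1 - y)) * (s * seg_avg (shifted_gauss_deriv y) t2 s)).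
  - rewrite E2, E3. ring.
  - ring.
Qed.

Lemma continuity_2d_pt_A4_kernel y x t : continuity_2d_pt (A4_kernel y) x t.
Proof.
  assert (Hfst : forall g : R -> R, (forall z, continuous g z) -> continuity_2d_pt (fun u v => g u) x t)
    by (intros g Hg; apply (continuity_2d_pt_comp1 g (fun u v => u)); [apply continuity_2d_pt_id1 | apply Hg]).
  assert (Hsnd : forall g : R -> R, (forall z, continuous g z) -> continuity_2d_pt (fun u v => g v) x t)
    by (intros g Hg; apply (continuity_2d_pt_comp1 g (fun u v => v)); [apply continuity_2d_pt_id2 | apply Hg]).
  assert (Havg : forall phi (a b : R -> R -> R), (forall z, continuous phi z) ->
            continuity_2d_pt a x t -> continuity_2d_pt b x t ->
            continuity_2d_pt (fun u v => seg_avg phi (a u v) (b u v)) x t)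
    by (intros; apply (continuity_2d_pt_comp2 (seg_avg phi)); auto using continuity_2d_pt_seg_avg).
  assert (Hdiff : forall c, continuity_2d_pt (fun u v => c * (u - v)) x t).
  { intros c. apply continuity_2d_pt_ext with (fun u v => c * u + (- c) * v + 0);
      [intros; ring | apply continuity_2d_pt_affine]. }
  assert (Herf : forall z, continuous (fun t1 => erf (sqrt 2 * (t1 - y))) z).
  { intros z. apply ex_derive_continuous_R. unfold erf. auto_derive. erf_derive_side. }
  assert (Hsub : continuity_2d_pt (fun u v => u - v) x t).
  { apply continuity_2d_pt_ext with (fun u v => 1 * (u - v)); [intros; ring | apply Hdiff]. }
  unfold A4_kernel.
  apply continuity_2d_pt_plus; [apply continuity_2d_pt_minus |]; apply continuity_2d_pt_mult.
  - apply continuity_2d_pt_mult; [apply continuity_2d_pt_const |].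
    apply Havg; [apply continuous_gauss | apply continuity_2d_pt_const | exact Hsub].
  - apply continuity_2d_pt_plus; [apply Hfst | apply Hsnd]; apply continuous_shifted_gauss.
  - repeat apply continuity_2d_pt_mult; try apply continuity_2d_pt_const.
    apply Hfst, continuous_shifted_gauss.
  - apply Havg; [apply continuous_gauss | | apply Hdiff].
    apply continuity_2d_pt_ext with (fun u v => 0 * u + sqrt 2 * v + - (sqrt 2 * y));
      [intros; ring | apply continuity_2d_pt_affine].
  - apply Hfst, Herf.
  - apply Havg; [apply continuous_shifted_gauss_deriv | apply continuity_2d_pt_id2 | exact Hsub].
Qed.

Definition edge_decay (y t : R) : R := exp (- 2 * y ^ 2) * exp (- (4 * - y) * t).

Lemma edge_decay_pos y t : 0 < edge_decay y t.
Proof. apply Rmult_lt_0_compat; apply exp_pos. Qed.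

Lemma edge_decay_le y t t' : y <= 0 -> t <= t' -> edge_decay y t' <= edge_decay y t.
Proof. intros Hy Ht. apply Rmult_le_compat_l; [left; apply exp_pos | apply exp_mono; nra]. Qed.

Lemma shifted_gauss_bounds y t : y <= 0 -> 0 <= t -> 0 < shifted_gauss y t <= edge_decay y t.
Proof.
  intros Hy Ht. unfold shifted_gauss. split; [apply exp_pos |]. rewrite exp_sq_shift.
  assert (H1 : exp (- 2 * t ^ 2) <= 1) by (apply exp_le_1; nra).
  assert (H0 : 0 < exp (- 2 * t ^ 2)) by apply exp_pos.
  assert (HB := edge_decay_pos y t). unfold edge_decay in *. nra.
Qed.

Lemma Rabs_shifted_gauss_deriv_le y v : y <= -1 -> 0 <= v ->
  Rabs (shifted_gauss_deriv y v) <= 8 * (- y) * edge_decay y v.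
Proof.
  intros Hy Hv. unfold shifted_gauss_deriv. rewrite exp_sq_shift. fold (edge_decay y v).
  assert (HB := edge_decay_pos y v).
  assert (H1 := exp_ineq1_le (2 * v ^ 2)).
  assert (E : exp (- 2 * v ^ 2) * exp (2 * v ^ 2) = 1)
    by (rewrite <- exp_plus; replace (- 2 * v ^ 2 + 2 * v ^ 2) with 0 by ring; apply exp_0).
  assert (Hp := exp_pos (2 * v ^ 2)). assert (Hq := exp_pos (- 2 * v ^ 2)).
  assert (Hve : v * exp (- 2 * v ^ 2) <= 1) by (assert (v <= exp (2 * v ^ 2)) by nra; nra).
  assert (Hq1 : exp (- 2 * v ^ 2) <= 1) by (apply exp_le_1; nra).
  replace (- 4 * (v - y) * (edge_decay y v * exp (- 2 * v ^ 2)))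
    with (- (4 * edge_decay y v * ((v + - y) * exp (- 2 * v ^ 2)))) by ring.
  rewrite Rabs_Ropp, Rabs_pos_eq by (apply Rmult_le_pos; nra).
  assert ((v + - y) * exp (- 2 * v ^ 2) <= 2 * - y) by nra.
  nra.
Qed.

Lemma sqrt_consts : 0 < 2 / sqrt PI <= 1.18 /\ 0 < sqrt 2 <= 1.5.
Proof.
  destruct sqrt_PI_bounds as [Hsp _]. destruct sqrt2_bounds as [Hs2 Hs2s].
  split; [split |]; [apply Rdiv_lt_0_compat; lra | | nra].
  apply (Rmult_le_reg_r (sqrt PI)); [lra |].
  replace (2 / sqrt PI * sqrt PI) with 2 by (field; lra). lra.
Qed.

Lemma Rabs_A4_kernel_le_near y t1 t2 : y <= -1 -> 0 <= t2 <= t1 ->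
  Rabs (A4_kernel y t1 t2) <= 13 * (- y) * edge_decay y t2.
Proof.
  intros Hy [H2 H12]. destruct sqrt_consts as [Hc Hs].
  set (B := edge_decay y t2). assert (HB : 0 < B) by apply edge_decay_pos.
  assert (HE1 : 0 < shifted_gauss y t1 <= B).
  { destruct (shifted_gauss_bounds y t1 ltac:(lra) ltac:(lra)). split; [lra |].
    eapply Rle_trans; [eassumption | now apply edge_decay_le; lra]. }
  assert (HE2 : 0 < shifted_gauss y t2 <= B) by (apply shifted_gauss_bounds; lra).
  assert (HQ1 : Rabs (seg_avg gauss 0 (t1 - t2)) <= 1)
    by (apply Rabs_seg_avg_le; [apply continuous_gauss | intros; apply Rabs_gauss_le_1]).
  assert (HQ2 : Rabs (seg_avg gauss (sqrt 2 * (t2 - y)) (sqrt 2 * (t1 - t2))) <= 1)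
    by (apply Rabs_seg_avg_le; [apply continuous_gauss | intros; apply Rabs_gauss_le_1]).
  assert (HQ3 : Rabs (seg_avg (shifted_gauss_deriv y) t2 (t1 - t2)) <= 8 * (- y) * B).
  { apply Rabs_seg_avg_le; [apply continuous_shifted_gauss_deriv |]. intros u Hu.
    eapply Rle_trans; [apply Rabs_shifted_gauss_deriv_le; nra |].
    apply Rmult_le_compat_l; [lra |]. apply edge_decay_le; nra. }
  assert (HP := Rabs_erf_le_1 (sqrt 2 * (t1 - y))).
  unfold A4_kernel.
  set (q1 := seg_avg gauss 0 (t1 - t2)) in *.
  set (q2 := seg_avg gauss (sqrt 2 * (t2 - y)) (sqrt 2 * (t1 - t2))) in *.
  set (q3 := seg_avg (shifted_gauss_deriv y) t2 (t1 - t2)) in *.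
  set (p := erf (sqrt 2 * (t1 - y))) in *.
  set (e1 := shifted_gauss y t1) in *. set (e2 := shifted_gauss y t2) in *.
  set (c := 2 / sqrt PI) in *.
  assert (Hq1 := Rabs_pos q1). assert (Hq2 := Rabs_pos q2). assert (Hq3 := Rabs_pos q3).
  assert (Hp := Rabs_pos p).
  assert (Ha : Rabs (c * q1 * (e1 + e2)) <= 1.18 * 2 * B).
  { rewrite !Rabs_mult, (Rabs_pos_eq c), (Rabs_pos_eq (e1 + e2)) by lra.
    assert (c * Rabs q1 <= 1.18) by nra. assert (0 <= c * Rabs q1) by nra. nra. }
  assert (Hb : Rabs (e1 * c * sqrt 2 * q2) <= 1.18 * 1.5 * B).
  { rewrite !Rabs_mult, (Rabs_pos_eq c), (Rabs_pos_eq e1), (Rabs_pos_eq (sqrt 2)) by lra.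
    assert (e1 * c <= B * 1.18) by (apply Rmult_le_compat; lra).
    assert (e1 * c * sqrt 2 <= B * 1.18 * 1.5) by (apply Rmult_le_compat; nra).
    assert (0 <= e1 * c) by nra. assert (0 <= e1 * c * sqrt 2) by nra.
    assert (e1 * c * sqrt 2 * Rabs q2 <= e1 * c * sqrt 2 * 1) by (apply Rmult_le_compat_l; lra).
    lra. }
  assert (Hc3 : Rabs (p * q3) <= 8 * - y * B) by (rewrite Rabs_mult; nra).
  eapply Rle_trans; [apply Rabs_triang |].
  eapply Rle_trans; [apply Rplus_le_compat_r, Rabs_triang |].
  rewrite Rabs_Ropp. nra.
Qed.

Lemma Rabs_A4_kernel_le_far y t1 t2 : y <= -1 -> 0 <= t2 -> 1 <= t1 - t2 ->
  Rabs (A4_kernel y t1 t2) <= 4 * edge_decay y t2 * exp (- (t1 - t2)).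
Proof.
  intros Hy H2 Hs. destruct sqrt_consts as [Hc Hs2]. destruct sqrt2_bounds as [Hs2' _].
  rewrite <- A4_integrand_kernel by lra. unfold A4_integrand.
  set (B := edge_decay y t2). assert (HB : 0 < B) by apply edge_decay_pos.
  set (s := t1 - t2). assert (Hs1 : 1 <= s) by (unfold s; lra). assert (Hes := exp_pos (- s)).
  assert (HE1 : 0 < exp (- 2 * (t1 - y) ^ 2) <= B * exp (- s)).
  { destruct (shifted_gauss_bounds y t1 ltac:(lra) ltac:(lra)) as [Hp Hle]. split; [exact Hp |].
    eapply Rle_trans; [exact Hle |]. unfold B, s, edge_decay.
    rewrite !Rmult_assoc, <- !exp_plus.
    apply exp_mono. nra. }
  assert (HE2 : 0 < exp (- 2 * (t2 - y) ^ 2) <= B) by (apply shifted_gauss_bounds; lra).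
  assert (Hd1 : Rabs (erf s + erf (sqrt 2 * (t2 - y))) <= 2).
  { eapply Rle_trans; [apply Rabs_triang |].
    assert (H1 := Rabs_erf_le_1 s). assert (H3 := Rabs_erf_le_1 (sqrt 2 * (t2 - y))). lra. }
  assert (Hd2 : Rabs (erf s - erf (sqrt 2 * (t1 - y))) <= 1.18 * exp (- s)).
  { rewrite !erf_gauss_int.
    replace (2 / sqrt PI * gauss_int s - 2 / sqrt PI * gauss_int (sqrt 2 * (t1 - y)))
      with (- (2 / sqrt PI * (gauss_int (sqrt 2 * (t1 - y)) - gauss_int s))) by ring.
    rewrite Rabs_Ropp, Rabs_mult, (Rabs_pos_eq (2 / sqrt PI)) by lra.
    assert (HT := gauss_int_sub_le_exp s (sqrt 2 * (t1 - y)) ltac:(unfold s; split; nra)).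
    rewrite Rabs_pos_eq by lra. apply Rmult_le_compat; lra. }
  fold s.
  assert (Hinv : 0 < / s <= 1) by (split; [apply Rinv_0_lt_compat; lra | rewrite <- Rinv_1; apply Rinv_le_contravar; lra]).
  rewrite Rabs_mult, Rabs_pos_eq by lra.
  set (N := exp (- 2 * (t1 - y) ^ 2) * (erf s + erf (sqrt 2 * (t2 - y)))
            + exp (- 2 * (t2 - y) ^ 2) * (erf s - erf (sqrt 2 * (t1 - y)))).
  assert (HN : Rabs N <= 4 * B * exp (- s)).
  { unfold N. eapply Rle_trans; [apply Rabs_triang |].
    rewrite !Rabs_mult, (Rabs_pos_eq (exp (- 2 * (t1 - y) ^ 2))), (Rabs_pos_eq (exp (- 2 * (t2 - y) ^ 2))) by lra.
    assert (0 <= Rabs (erf s + erf (sqrt 2 * (t2 - y)))) by apply Rabs_pos.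
    assert (0 <= Rabs (erf s - erf (sqrt 2 * (t1 - y)))) by apply Rabs_pos.
    assert (exp (- 2 * (t1 - y) ^ 2) * Rabs (erf s + erf (sqrt 2 * (t2 - y))) <= B * exp (- s) * 2)
      by (apply Rmult_le_compat; lra).
    assert (exp (- 2 * (t2 - y) ^ 2) * Rabs (erf s - erf (sqrt 2 * (t1 - y))) <= B * (1.18 * exp (- s)))
      by (apply Rmult_le_compat; lra).
    nra. }
  assert (0 <= Rabs N) by apply Rabs_pos.
  assert (/ s * Rabs N <= Rabs N) by (rewrite <- (Rmult_1_l (Rabs N)) at 2; apply Rmult_le_compat_r; lra).
  change (/ s * Rabs N <= 4 * B * exp (- s)). lra.
Qed.

Lemma Rabs_A4_kernel_le y t1 t2 : y <= -1 -> 0 <= t2 <= t1 ->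
  Rabs (A4_kernel y t1 t2) <= 60 * (- y) * exp (- 2 * y ^ 2) * exp (- t1) * exp (- (4 * - y - 1) * t2).
Proof.
  intros Hy Ht. assert (HB := edge_decay_pos y t2). assert (Hes := exp_pos (- (t1 - t2))).
  replace (60 * - y * exp (- 2 * y ^ 2) * exp (- t1) * exp (- (4 * - y - 1) * t2))
    with (60 * - y * (edge_decay y t2 * exp (- (t1 - t2))))
    by (unfold edge_decay; rewrite !Rmult_assoc, <- !exp_plus; do 3 f_equal; ring).
  destruct (Rle_lt_dec 1 (t1 - t2)).
  - eapply Rle_trans; [apply Rabs_A4_kernel_le_far; lra |].
    assert (0 < edge_decay y t2 * exp (- (t1 - t2))) by (apply Rmult_lt_0_compat; auto). nra.
  - eapply Rle_trans; [apply Rabs_A4_kernel_le_near; lra |].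
    assert (exp (- (1)) <= exp (- (t1 - t2))) by (apply exp_mono; lra).
    assert (/ 3 <= exp (- (1))).
    { rewrite exp_Ropp. apply Rinv_le_contravar; [apply exp_pos | apply exp_le_3]. }
    assert (HyB : 0 < - y * edge_decay y t2) by nra.
    assert (- y * edge_decay y t2 * / 3 <= - y * edge_decay y t2 * exp (- (t1 - t2)))
      by (apply Rmult_le_compat_l; lra).
    nra.
Qed.

Lemma Rabs_A4_inner_le y t1 : y <= -1 -> 0 <= t1 ->
  Rabs (RInt (fun t2 => A4_integrand y t1 t2) 0 t1) <= 20 * exp (- 2 * y ^ 2) * exp (- (1) * t1).
Proof.
  intros Hy Ht.
  rewrite (RInt_ext_R _ (A4_kernel y t1)).
  2:{ intros x Hx. apply A4_integrand_kernel. rewrite Rmin_left, Rmax_right in Hx by lra. lra. }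
  eapply Rle_trans.
  - apply (Rabs_RInt_le_exp _ (60 * (- y) * exp (- 2 * y ^ 2) * exp (- t1)) (4 * - y - 1) 0 t1 Ht); [lra | |].
    + apply ex_RInt_continuous_R. intros z _.
      apply continuity_2d_pt_continuous_snd, continuity_2d_pt_A4_kernel.
    + intros t Hti. apply Rabs_A4_kernel_le; lra.
  - rewrite Rmult_0_r, exp_0, Rmult_1_r, Ropp_mult_distr_l_reverse, Rmult_1_l.
    assert (0 < exp (- 2 * y ^ 2) * exp (- t1)) by (apply Rmult_lt_0_compat; apply exp_pos).
    apply (Rmult_le_reg_r (4 * - y - 1)); [lra |].
    replace (60 * - y * exp (- 2 * y ^ 2) * exp (- t1) / (4 * - y - 1) * (4 * - y - 1))
      with (60 * - y * (exp (- 2 * y ^ 2) * exp (- t1))) by (field; lra).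
    nra.
Qed.

Lemma A4_bound y : y <= -1 -> Rabs (A4 y) <= 10 * exp (- 2 * y ^ 2).
Proof.
  intros Hy. unfold A4.
  assert (Hb : Rabs (int0inf (fun t1 => RInt (fun t2 => A4_integrand y t1 t2) 0 t1))
               <= 20 * exp (- 2 * y ^ 2) / 1).
  { apply Rabs_int0inf_le_exp; [lra | |].
    - intros t _. apply (continuous_ext (fun x => RInt (A4_kernel y x) 0 x)).
      + intros x. apply RInt_ext_R. intros z Hz. symmetry. apply A4_integrand_kernel.
        unfold Rmin, Rmax in Hz. destruct Rle_dec in Hz; lra.
      + apply continuous_RInt_diag. intros; apply continuity_2d_pt_A4_kernel.
    - intros t Ht. now apply Rabs_A4_inner_le. }
  assert (Hsq := sqrt_2PI_bounds). assert (He := exp_pos (- 2 * y ^ 2)).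
  rewrite Rabs_mult, Rabs_Ropp, Rabs_pos_eq by (apply Rdiv_le_0_compat; lra).
  apply Rle_trans with (1 / sqrt (2 * PI) * (20 * exp (- 2 * y ^ 2) / 1)).
  - apply Rmult_le_compat_l; [apply Rdiv_le_0_compat; lra | exact Hb].
  - apply (Rmult_le_reg_r (sqrt (2 * PI))); [lra |].
    replace (1 / sqrt (2 * PI) * (20 * exp (- 2 * y ^ 2) / 1) * sqrt (2 * PI))
      with (20 * exp (- 2 * y ^ 2)) by (field; lra).
    nra.
Qed.

Lemma A_ratio_bound y : y <= -1 -> Rabs (A y / A_asymptote y - 1) <= 74 / (- y).
Proof.
  intros Hy.
  assert (H3 := A3_ratio_bound y Hy). assert (H1 := A1_bound y Hy).
  assert (H2 := A2_bound y Hy). assert (H4 := A4_bound y Hy).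
  assert (Hsq := sqrt_2PI_bounds).
  set (e := exp (- 2 * y ^ 2)) in *. assert (He : 0 < e) by apply exp_pos.
  assert (HD : A_asymptote y = - y * e / (2 * sqrt (2 * PI)))
    by (unfold A_asymptote; fold e; now rewrite Rabs_left by lra).
  assert (E : A y / A_asymptote y - 1
              = (A3 y / A_asymptote y - 1) + (Defs.A1 y + A2 y + A4 y) / A_asymptote y)
    by (unfold A; rewrite HD; field; nra).
  assert (Hs : Rabs (Defs.A1 y + A2 y + A4 y) <= 12 * e).
  { eapply Rle_trans; [apply Rabs_triang |].
    eapply Rle_trans; [apply Rplus_le_compat_r, Rabs_triang | lra]. }
  assert (Hr : Rabs ((Defs.A1 y + A2 y + A4 y) / A_asymptote y) <= 72 / (- y)).
  { rewrite HD. unfold Rdiv at 1.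
    rewrite Rabs_mult, (Rabs_pos_eq (/ _)) by (left; apply Rinv_0_lt_compat, Rdiv_lt_0_compat; nra).
    replace (/ (- y * e / (2 * sqrt (2 * PI)))) with (2 * sqrt (2 * PI) / (- y * e))
      by (field; repeat split; lra).
    apply Rle_trans with (12 * e * (2 * sqrt (2 * PI) / (- y * e))).
    - apply Rmult_le_compat_r; [apply Rdiv_le_0_compat; nra | exact Hs].
    - replace (12 * e * (2 * sqrt (2 * PI) / (- y * e))) with (24 * sqrt (2 * PI) / (- y))
        by (field; lra).
      apply Rmult_le_compat_r; [left; apply Rinv_0_lt_compat |]; lra. }
  rewrite E. eapply Rle_trans; [apply Rabs_triang |].
  replace (74 / - y) with (2 / - y + 72 / - y) by (field; lra). lra.
Qed.

Theorem lemma9 :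
  is_lim (fun y => A y / (Rabs y * exp (- 2 * y ^ 2) / (2 * sqrt (2 * PI))))
         m_infty 1.
Proof.
  apply filterlim_locally. intros eps. assert (He := cond_pos eps).
  exists (Rmin (-1) (- (74 / eps)) - 1). intros y Hy.
  assert (Hy1 : y <= -1) by (assert (H := Rmin_l (-1) (- (74 / eps))); lra).
  assert (Hy2 : y < - (74 / eps)) by (assert (H := Rmin_r (-1) (- (74 / eps))); lra).
  apply ball_R. fold (A_asymptote y).
  eapply Rle_lt_trans; [now apply A_ratio_bound |].
  apply (Rmult_lt_reg_r (- y)); [lra |].
  replace (74 / - y * - y) with 74 by (field; lra).
  apply (Rmult_lt_reg_r (/ eps)); [apply Rinv_0_lt_compat; lra |].
  replace (eps * - y * / eps) with (- y) by (field; lra). unfold Rdiv in Hy2. lra.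
Qed.
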